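(* Let $\alpha$ be a badly approximable real number, i.e. $\inf_{q\ge1} q\,\|q\alpha\|>0$, and let $a$ be a real number with $0<a<1$. There exists a constant $C(\alpha)>0$ (depending on $\alpha$ and $a$) such that for every integer $q\ge2$, $$\sum_{x=q}^{q^3}\frac{1}{\|\alpha x\|\,x\,\bigl(\log(1/\|x\alpha\|)\bigr)^a\,(\log x)^{2-a}}\le C(\alpha).$$
   Context: For a real number $x$, $\|x\|$ denotes the distance from $x$ to the nearest integer. *)

From Stdlib Require Import Reals.
Open Scope R_scope.

(* floor x = up x - 1, since x < up x <= x + 1 *)
Definition rfloor (x : R) : R := IZR (up x) - 1.

Definition dnint (x : R) : R := Rmin (x - rfloor x) (rfloor x + 1 - x).

Definition badly_approximable (alpha : R) : Prop :=
  exists c : R, 0 < c /\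
    forall q : nat, (1 <= q)%nat -> c <= INR q * dnint (INR q * alpha).

Definition lemma3_term (alpha a : R) (x : nat) : R :=
  / (dnint (alpha * INR x) * INR x
     * Rpower (ln (/ dnint (INR x * alpha))) a
     * Rpower (ln (INR x)) (2 - a)).

(* Fix m with q ||q alpha|| >= 2^-m for all q >= 1.  Every x >= 2 falls into a block
   (k, i): 2^k <= x < 2^(k+1) and 2^i <= 1/||x alpha|| < 2^(i+1), where 1 <= i <= k + m.
   On the block the term is at most 2^(i+1) / (2^k (i ln 2)^a (k ln 2)^(2-a)).  Two
   points of the block with x alpha, y alpha in the same half modulo 1 satisfy
   | ||x alpha|| - ||y alpha|| | >= ||(y-x) alpha|| >= 2^-(k+m), so a pigeonhole argument
   bounds the block's population by 2 (2^(k+m-i) + 1).  Hence block (k, i) contributes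
   O(2^m / (i^a k^(2-a))); summing over i <= k + m with sum i^-a <= n^(1-a)/(1-a) gives
   O(1/k), and the scales k of x in [q, q^3] range over [log2 q, 3 log2 q + 2], whose
   harmonic sum is bounded. *)

From Stdlib Require Import Reals Lra Lia List ZArith Psatz.
Open Scope R_scope.

Lemma ln_le_mono x y : 0 < x -> x <= y -> ln x <= ln y.
Proof.
  intros Hx Hxy; destruct (Rle_lt_or_eq_dec _ _ Hxy) as [Hlt | <-].
  - now apply Rlt_le, ln_increasing.
  - apply Rle_refl.
Qed.

Lemma exp_le_mono x y : x <= y -> exp x <= exp y.
Proof.
  intros Hxy; destruct (Rle_lt_or_eq_dec _ _ Hxy) as [Hlt | <-].
  - now apply Rlt_le, exp_increasing.
  - apply Rle_refl.
Qed.

(* The tangent line of the concave function ln at 1 lies above it. *)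
Lemma ln_le_pred z : 0 < z -> ln z <= z - 1.
Proof. intros Hz; pose proof (exp_ineq1_le (ln z)) as H; rewrite exp_ln in H; lra. Qed.

Lemma Rpower_pos x y : 0 < Rpower x y.
Proof. apply exp_pos. Qed.

Lemma ln2_pos : 0 < ln 2.
Proof. pose proof ln_lt_2; lra. Qed.

Lemma INR_pow2 n : INR (2 ^ n) = 2 ^ n.
Proof. now rewrite pow_INR. Qed.

(* Weighted AM-GM: x^t y^(1-t) <= t x + (1-t) y.  Apply the tangent bound
   to x/A and y/A, where A is the weighted arithmetic mean. *)
Lemma weighted_am_gm x y t : 0 < x -> 0 < y -> 0 <= t <= 1 ->
  Rpower x t * Rpower y (1 - t) <= t * x + (1 - t) * y.
Proof.
  intros Hx Hy Ht. set (A := t * x + (1 - t) * y).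
  assert (HA : 0 < A) by (unfold A; nra).
  assert (Hx' := ln_le_pred (x * / A) ltac:(apply Rdiv_lt_0_compat; lra)).
  assert (Hy' := ln_le_pred (y * / A) ltac:(apply Rdiv_lt_0_compat; lra)).
  rewrite ln_mult, ln_Rinv in Hx', Hy' by (try apply Rinv_0_lt_compat; lra).
  assert (Hmean : t * (x * / A - 1) + (1 - t) * (y * / A - 1) = 0)
    by (unfold A; field; fold A; lra).
  unfold Rpower; rewrite <- exp_plus, <- (exp_ln A HA).
  apply exp_le_mono; nra.
Qed.

Fixpoint lsum {A} (f : A -> R) (l : list A) : R :=
  match l with nil => 0 | x :: l' => f x + lsum f l' end.

Lemma lsum_app {A} (f : A -> R) l1 l2 : lsum f (l1 ++ l2) = lsum f l1 + lsum f l2.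
Proof. induction l1; simpl; lra. Qed.

Lemma lsum_ext {A} (f g : A -> R) l : (forall x, f x = g x) -> lsum f l = lsum g l.
Proof. intros H; induction l; simpl; [reflexivity|]. now rewrite H, IHl. Qed.

Lemma lsum_le {A} (f g : A -> R) l :
  (forall x, In x l -> f x <= g x) -> lsum f l <= lsum g l.
Proof.
  induction l as [|x l IH]; simpl; intros H; [lra|].
  pose proof (H x (or_introl eq_refl)); pose proof (IH (fun y Hy => H y (or_intror Hy))); lra.
Qed.

Lemma lsum_nonneg {A} (f : A -> R) l : (forall x, In x l -> 0 <= f x) -> 0 <= lsum f l.
Proof.
  induction l as [|x l IH]; simpl; intros H; [lra|].
  pose proof (H x (or_introl eq_refl)); pose proof (IH (fun y Hy => H y (or_intror Hy))); lra.
Qed.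

Lemma lsum_plus {A} (f g : A -> R) l : lsum (fun x => f x + g x) l = lsum f l + lsum g l.
Proof. induction l; simpl; [ring|]. rewrite IHl; ring. Qed.

Lemma lsum_scal {A} (c : R) (f : A -> R) l : lsum (fun x => c * f x) l = c * lsum f l.
Proof. induction l; simpl; [ring|]. rewrite IHl; ring. Qed.

Lemma lsum_const {A} (c : R) (l : list A) : lsum (fun _ => c) l = INR (length l) * c.
Proof. induction l; cbn [lsum length]; [simpl; ring|]. rewrite S_INR, IHl; ring. Qed.

Lemma lsum_map {A B} (f : B -> R) (g : A -> B) l :
  lsum f (map g l) = lsum (fun x => f (g x)) l.
Proof. induction l; simpl; [reflexivity|]. now rewrite IHl. Qed.

Lemma lsum_flat_map {A B} (f : B -> R) (g : A -> list B) l :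
  lsum f (flat_map g l) = lsum (fun k => lsum f (g k)) l.
Proof. induction l; simpl; [reflexivity|]. now rewrite lsum_app, IHl. Qed.

Lemma sum_f_as_lsum (f : nat -> R) s n : sum_f s n f = lsum f (seq s (S (n - s))).
Proof.
  unfold sum_f; induction (n - s)%nat as [|N IH].
  - simpl; ring.
  - rewrite seq_S, lsum_app, <- IH; simpl. replace (S (N + s)) with (s + S N)%nat by lia; ring.
Qed.

(* Comparison with the integral of t^(-a) on [n, n+1]:
   (n+1)^(-a) <= ((n+1)^(1-a) - n^(1-a)) / (1-a); a consequence of weighted AM-GM,
   which gives (n+1)^a n^(1-a) <= n + a. *)
Lemma Rpower_neg_le_increment a n : 0 < a < 1 -> 0 < n ->
  / Rpower (n + 1) a <= (Rpower (n + 1) (1 - a) - Rpower n (1 - a)) / (1 - a).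
Proof.
  intros Ha Hn.
  set (P := Rpower (n + 1) a); set (Q := Rpower n (1 - a)); set (S := Rpower (n + 1) (1 - a)).
  assert (HP : 0 < P) by apply Rpower_pos.
  assert (HPQ : P * Q <= n + a)
    by (pose proof (weighted_am_gm (n + 1) n a ltac:(lra) Hn ltac:(lra)); fold P Q in H; lra).
  assert (HSP : S * P = n + 1).
  { unfold S, P; rewrite <- Rpower_plus; replace (1 - a + a) with 1 by ring; apply Rpower_1; lra. }
  apply Rmult_le_reg_l with (P * (1 - a)); [nra|].
  replace (P * (1 - a) * / P) with (1 - a) by (field; lra).
  replace (P * (1 - a) * ((S - Q) / (1 - a))) with (S * P - P * Q) by (field; lra).
  lra.
Qed.

Lemma sum_Rpower_neg_le a n : 0 < a < 1 -> (1 <= n)%nat ->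
  lsum (fun i => / Rpower (INR i) a) (seq 1 n) <= Rpower (INR n) (1 - a) / (1 - a).
Proof.
  intros Ha Hn; induction n as [|n IH]; [lia|].
  destruct (Nat.eq_dec n 0) as [-> | Hn0].
  - simpl; unfold Rpower; rewrite ln_1, !Rmult_0_r, exp_0, Rinv_1, Rplus_0_r.
    unfold Rdiv; rewrite Rmult_1_l, <- Rinv_1 at 1.
    apply Rinv_le_contravar; lra.
  - rewrite seq_S, lsum_app; cbn [lsum]. replace (1 + n)%nat with (S n) by lia.
    rewrite S_INR.
    pose proof (IH ltac:(lia)) as Hsum.
    pose proof (Rpower_neg_le_increment a (INR n) Ha ltac:(apply lt_0_INR; lia)) as Hstep.
    unfold Rdiv in *; lra.
Qed.

(* (k+m)^s <= k^s (1+m) for 0 <= s <= 1 and k >= 1, since k + m <= k (1+m). *)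
Lemma Rpower_shift_le k m s : 0 <= s <= 1 -> (1 <= k)%nat ->
  Rpower (INR (k + m)) s <= Rpower (INR k) s * (1 + INR m).
Proof.
  intros Hs Hk.
  assert (Hk1 : 1 <= INR k) by (apply (le_INR 1); lia).
  pose proof (pos_INR m) as Hm.
  apply Rle_trans with (Rpower (INR k * (1 + INR m)) s).
  - apply Rle_Rpower_l; [lra|]. rewrite plus_INR; split; nra.
  - rewrite <- Rpower_mult_distr by lra. apply Rmult_le_compat_l; [left; apply Rpower_pos|].
    apply Rle_trans with (Rpower (1 + INR m) 1); [apply Rle_Rpower; lra|].
    rewrite Rpower_1; lra.
Qed.

Section Grouping.
Variables (A B : Type) (eq_dec : forall y z : B, {y = z} + {y <> z}).

Definition fiber (p : A -> B) (y : B) (l : list A) : list A :=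
  filter (fun x => if eq_dec (p x) y then true else false) l.

Lemma term_le_lsum (g : B -> R) z P : In z P -> (forall y, In y P -> 0 <= g y) ->
  g z <= lsum (fun y => if eq_dec z y then g y else 0) P.
Proof.
  induction P as [|y P IH]; simpl; [tauto|]. intros Hin Hg.
  assert (Hrest : 0 <= lsum (fun y => if eq_dec z y then g y else 0) P).
  { apply lsum_nonneg; intros w Hw; destruct (eq_dec z w); [apply Hg; auto | lra]. }
  assert (Hhead : 0 <= if eq_dec z y then g y else 0)
    by (destruct (eq_dec z y); [apply Hg; auto | lra]).
  destruct Hin as [-> | Hin].
  - destruct (eq_dec z z) as [_ | Hneq]; [lra | congruence].
  - pose proof (IH Hin (fun w Hw => Hg w (or_intror Hw))); lra.
Qed.

Lemma lsum_group (f : A -> R) (p : A -> B) (g : B -> R) l P :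
  (forall y, In y P -> 0 <= g y) ->
  (forall x, In x l -> f x <= g (p x) /\ In (p x) P) ->
  lsum f l <= lsum (fun y => g y * INR (length (fiber p y l))) P.
Proof.
  intros Hg; induction l as [|x l IH]; intros Hl.
  - simpl; apply lsum_nonneg; intros y _; simpl; lra.
  - rewrite (lsum_ext _ (fun y => (if eq_dec (p x) y then g y else 0)
                                  + g y * INR (length (fiber p y l)))).
    + rewrite lsum_plus; simpl lsum.
      destruct (Hl x (or_introl eq_refl)) as [Hfx Hpx].
      pose proof (term_le_lsum g (p x) P Hpx Hg).
      pose proof (IH (fun w Hw => Hl w (or_intror Hw))); lra.
    + intros y; unfold fiber; simpl filter.
      destruct (eq_dec (p x) y); [cbn [length]; rewrite S_INR|]; ring.
Qed.

End Grouping.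

Arguments fiber {A B} eq_dec p y l.

Definition pair_eq_dec (y z : nat * nat) : {y = z} + {y <> z}.
Proof. decide equality; apply Nat.eq_dec. Defined.

Lemma pigeonhole {A} (h : A -> nat) (F : list A) (n : nat) :
  NoDup F -> (forall x y, In x F -> In y F -> h x = h y -> x = y) ->
  (forall x, In x F -> (h x < n)%nat) -> (length F <= n)%nat.
Proof.
  intros HF Hinj Hrange. rewrite <- (length_map h F), <- (length_seq n 0).
  apply NoDup_incl_length.
  - apply NoDup_map_NoDup_ForallPairs; [intros x y Hx Hy; now apply Hinj | exact HF].
  - intros z Hz; apply in_map_iff in Hz as [x [<- Hx]]; apply in_seq.
    specialize (Hrange x Hx); lia.
Qed.

(** * Distance to the nearest integer *)

Lemma rfloor_Int_part z : rfloor z = IZR (Int_part z).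
Proof. unfold rfloor, Int_part; now rewrite minus_IZR. Qed.

Lemma dnint_frac_part z : dnint z = Rmin (frac_part z) (1 - frac_part z).
Proof. unfold dnint, frac_part; rewrite rfloor_Int_part; f_equal; ring. Qed.

Lemma dnint_nonneg z : 0 <= dnint z.
Proof. rewrite dnint_frac_part; pose proof (base_fp z); apply Rmin_glb; lra. Qed.

Lemma dnint_le_half z : dnint z <= 1 / 2.
Proof.
  rewrite dnint_frac_part; destruct (Rle_dec (frac_part z) (1 / 2)).
  - eapply Rle_trans; [apply Rmin_l | lra].
  - eapply Rle_trans; [apply Rmin_r | lra].
Qed.

Lemma dnint_le_dist z n : dnint z <= Rabs (z - IZR n).
Proof.
  rewrite dnint_frac_part; pose proof (base_fp z) as Hfp; unfold frac_part in *.
  destruct (Z_le_gt_dec n (Int_part z)) as [Hn | Hn].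
  - apply IZR_le in Hn; eapply Rle_trans; [apply Rmin_l|]; rewrite Rabs_right; lra.
  - assert (Hn' : (Int_part z + 1 <= n)%Z) by lia.
    apply IZR_le in Hn'; rewrite plus_IZR in Hn'.
    eapply Rle_trans; [apply Rmin_r|]; rewrite Rabs_left1; lra.
Qed.

Lemma dnint_sub_le u v : dnint (u - v) <= Rabs (frac_part u - frac_part v).
Proof.
  replace (frac_part u - frac_part v) with (u - v - IZR (Int_part u - Int_part v))
    by (unfold frac_part; rewrite minus_IZR; ring).
  apply dnint_le_dist.
Qed.

Definition half_side (z : R) : nat := if Rle_dec (frac_part z) (1 / 2) then 0%nat else 1%nat.

(* The side is a bit, which bounds the number of pigeonhole cells. *)
Lemma half_side_le z : (half_side z <= 1)%nat.
Proof. unfold half_side; destruct Rle_dec; lia. Qed.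

Lemma dnint_same_side u v : half_side u = half_side v ->
  Rabs (dnint u - dnint v) = Rabs (frac_part u - frac_part v).
Proof.
  unfold half_side; intros Hs; rewrite !dnint_frac_part.
  destruct (Rle_dec (frac_part u) (1 / 2)), (Rle_dec (frac_part v) (1 / 2)); try discriminate.
  - now rewrite !Rmin_left by lra.
  - rewrite !Rmin_right by lra; rewrite <- Rabs_Ropp; f_equal; ring.
Qed.

(** * Integer parts and dyadic levels *)

Definition nat_floor (r : R) : nat := Z.to_nat (Int_part r).

Lemma nat_floor_spec r : 0 <= r -> INR (nat_floor r) <= r < INR (nat_floor r) + 1.
Proof.
  intros Hr; pose proof (base_fp r) as Hfp; unfold frac_part in Hfp.
  assert (Hz : (-1 < Int_part r)%Z) by (apply lt_IZR; lra).
  unfold nat_floor; rewrite INR_IZR_INZ, Z2Nat.id by lia; lra.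
Qed.

Lemma nat_floor_separated u v : 0 <= u -> 0 <= v -> 1 <= Rabs (u - v) ->
  nat_floor u <> nat_floor v.
Proof.
  intros Hu Hv Huv Heq.
  destruct (nat_floor_spec u Hu) as [Hu1 Hu2], (nat_floor_spec v Hv) as [Hv1 Hv2].
  rewrite Heq in Hu1, Hu2.
  assert (Rabs (u - v) < 1) by (apply Rabs_def1; lra); lra.
Qed.

Definition dyadic_level (d : R) : nat := Nat.log2 (nat_floor (/ d)).

Lemma dyadic_level_spec d : 0 < d <= 1 / 2 ->
  2 ^ dyadic_level d <= / d < 2 ^ S (dyadic_level d) /\ (1 <= dyadic_level d)%nat.
Proof.
  intros Hd.
  assert (Hu : 2 <= / d) by (replace 2 with (/ (1 / 2)) by field; apply Rinv_le_contravar; lra).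
  destruct (nat_floor_spec (/ d) ltac:(lra)) as [N1 N2].
  unfold dyadic_level; set (N := nat_floor (/ d)) in *.
  assert (HN : (1 < N)%nat) by (apply INR_lt; simpl; lra).
  destruct (Nat.log2_spec N ltac:(lia)) as [L1 L2].
  assert (Hlt : INR N + 1 <= 2 ^ S (Nat.log2 N))
    by (rewrite <- S_INR, <- INR_pow2; apply le_INR; lia).
  apply le_INR in L1; rewrite INR_pow2 in L1.
  split; [lra | now apply Nat.log2_pos].
Qed.

Lemma dyadic_level_lt d n : 0 < d <= 1 / 2 -> / d < 2 ^ n -> (dyadic_level d < n)%nat.
Proof.
  intros Hd Hn; destruct (dyadic_level_spec d Hd) as [[H1 _] _].
  apply (Nat.pow_lt_mono_r_iff 2); [lia|].
  apply INR_lt; rewrite !INR_pow2; lra.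
Qed.

Lemma exists_inv_pow2_le c : 0 < c -> exists m : nat, / 2 ^ m <= c.
Proof.
  intros Hc. exists (nat_floor (/ c)).
  destruct (nat_floor_spec (/ c) ltac:(left; apply Rinv_0_lt_compat; lra)) as [_ H].
  set (N := nat_floor (/ c)) in *.
  assert (HN : INR N + 1 <= 2 ^ N).
  { clear; induction N; [simpl; lra|]. rewrite S_INR; simpl.
    assert (1 <= 2 ^ N) by (apply pow_R1_Rle; lra); lra. }
  rewrite <- (Rinv_inv c); apply Rinv_le_contravar; [apply Rinv_0_lt_compat; lra | lra].
Qed.

(** * Summing the block bounds *)

(* Bound for one term lemma3_term x with 2^k <= x < 2^(k+1) and 2^i <= 1/||x alpha|| < 2^(i+1). *)
Definition block_bound (a : R) (k i : nat) : R :=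
  2 ^ S i / (2 ^ k * Rpower (INR i * ln 2) a * Rpower (INR k * ln 2) (2 - a)).

Lemma block_bound_pos a k i : 0 < block_bound a k i.
Proof.
  apply Rdiv_lt_0_compat; [apply pow_lt; lra|].
  pose proof (pow_lt 2 k ltac:(lra)); pose proof (Rpower_pos (INR i * ln 2) a);
    pose proof (Rpower_pos (INR k * ln 2) (2 - a)).
  repeat apply Rmult_lt_0_compat; lra.
Qed.

(* A block of 2(2^(k+m-i)+1) terms contributes at most 8 2^m / ((ln 2)^2 i^a k^(2-a)):
   the factor 2^(i+1) of the bound cancels against the count 2^(k+m-i). *)
Lemma block_total a m k i : (1 <= k)%nat -> (1 <= i)%nat -> (i <= k + m)%nat ->
  block_bound a k i * INR (2 * (2 ^ (k + m - i) + 1))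
  <= 8 * 2 ^ m / ln 2 ^ 2 / (Rpower (INR i) a * Rpower (INR k) (2 - a)).
Proof.
  intros Hk Hi Hik. pose proof ln2_pos as Hln.
  assert (Hcount : INR (2 * (2 ^ (k + m - i) + 1)) <= 4 * 2 ^ (k + m - i)).
  { rewrite mult_INR, plus_INR, INR_pow2; simpl INR.
    pose proof (pow_R1_Rle 2 (k + m - i) ltac:(lra)); lra. }
  assert (Hpow : 2 ^ S i * 2 ^ (k + m - i) = 2 * (2 ^ k * 2 ^ m)).
  { rewrite <- !pow_add; change (2 * 2 ^ (k + m)) with (2 ^ S (k + m)); f_equal; lia. }
  assert (Hln2 : Rpower (ln 2) a * Rpower (ln 2) (2 - a) = ln 2 ^ 2).
  { rewrite <- Rpower_plus, <- Rpower_pow by lra; f_equal; simpl; ring. }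
  unfold block_bound.
  rewrite <- (Rpower_mult_distr (INR i)), <- (Rpower_mult_distr (INR k))
    by (try apply lt_0_INR; lia || lra).
  set (X := Rpower (INR i) a); set (Y := Rpower (INR k) (2 - a));
    set (L1 := Rpower (ln 2) a) in *; set (L2 := Rpower (ln 2) (2 - a)) in *.
  assert (0 < X) by apply Rpower_pos; assert (0 < Y) by apply Rpower_pos.
  assert (0 < L1) by apply Rpower_pos; assert (0 < L2) by apply Rpower_pos.
  pose proof (pow_lt 2 k ltac:(lra)); pose proof (pow_lt 2 (S i) ltac:(lra)).
  apply Rle_trans with (2 ^ S i / (2 ^ k * (X * L1) * (Y * L2)) * (4 * 2 ^ (k + m - i))).
  { apply Rmult_le_compat_l; [|exact Hcount].
    left; apply Rdiv_lt_0_compat; [lra | repeat apply Rmult_lt_0_compat; lra]. }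
  replace (2 ^ S i / (2 ^ k * (X * L1) * (Y * L2)) * (4 * 2 ^ (k + m - i)))
    with (4 * (2 ^ S i * 2 ^ (k + m - i)) / (2 ^ k * (X * Y) * (L1 * L2)))
    by (field; repeat split; lra).
  rewrite Hpow, Hln2; apply Req_le; field; repeat split; lra.
Qed.

(* Summing over the levels 1 <= i <= k + m costs a factor (1+m) k^(1-a) / (1-a),
   leaving the harmonic weight 1/k. *)
Lemma row_sum_le a m k D : 0 < a < 1 -> 0 <= D -> (1 <= k)%nat ->
  lsum (fun i => D / (Rpower (INR i) a * Rpower (INR k) (2 - a))) (seq 1 (k + m))
  <= D * (1 + INR m) / (1 - a) / INR k.
Proof.
  intros Ha HD Hk.
  assert (Hkpos : 0 < INR k) by (apply lt_0_INR; lia).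
  set (W := Rpower (INR k) (1 - a)); assert (HW : 0 < W) by apply Rpower_pos.
  assert (HY : Rpower (INR k) (2 - a) = INR k * W).
  { unfold W; replace (2 - a) with (1 + (1 - a)) by ring; now rewrite Rpower_plus, Rpower_1. }
  rewrite HY, (lsum_ext _ (fun i => D / (INR k * W) * / Rpower (INR i) a))
    by (intros i; pose proof (Rpower_pos (INR i) a); field; repeat split; lra).
  rewrite lsum_scal.
  assert (HDkW : 0 <= D / (INR k * W)) by (apply Rmult_le_pos; [lra | left; apply Rinv_0_lt_compat; nra]).
  apply Rle_trans with (D / (INR k * W) * (W * (1 + INR m) / (1 - a))).
  - apply Rmult_le_compat_l; [exact HDkW|].
    eapply Rle_trans; [apply sum_Rpower_neg_le; [lra | lia]|].
    apply Rmult_le_compat_r; [left; apply Rinv_0_lt_compat; lra|].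
    apply Rpower_shift_le; [lra | lia].
  - apply Req_le; field; repeat split; lra.
Qed.

(* sum_{k=K}^{3K+2} E/k <= 5E: the window has 2K+3 terms, each at most E/K. *)
Lemma harmonic_window_le E K : 0 <= E -> (1 <= K)%nat ->
  lsum (fun k => E / INR k) (seq K (2 * K + 3)) <= 5 * E.
Proof.
  intros HE HK. assert (HK1 : 1 <= INR K) by (apply (le_INR 1); lia).
  apply Rle_trans with (lsum (fun _ => E / INR K) (seq K (2 * K + 3))).
  - apply lsum_le; intros k Hk; apply in_seq in Hk.
    apply Rmult_le_compat_l; [lra|]. apply Rinv_le_contravar; [lra | apply le_INR; lia].
  - rewrite lsum_const, length_seq, plus_INR, mult_INR; simpl INR.
    replace (((1 + 1) * INR K + (1 + 1 + 1)) * (E / INR K)) with (2 * E + 3 * E / INR K)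
      by (field; lra).
    assert (E / INR K <= E).
    { unfold Rdiv; rewrite <- (Rmult_1_r E) at 2; apply Rmult_le_compat_l; [lra|].
      rewrite <- Rinv_1; apply Rinv_le_contravar; lra. }
    unfold Rdiv in *; lra.
Qed.

Lemma log2_cube_window q x : (1 <= q)%nat -> (q <= x <= q ^ 3)%nat ->
  (Nat.log2 q <= Nat.log2 x < Nat.log2 q + (2 * Nat.log2 q + 3))%nat.
Proof.
  intros Hq Hx; split; [now apply Nat.log2_le_mono|].
  destruct (Nat.log2_spec q ltac:(lia)) as [_ Hq2].
  assert (Hcube : (x < 2 ^ (3 * S (Nat.log2 q)))%nat).
  { rewrite Nat.mul_comm, Nat.pow_mul_r.
    apply Nat.le_lt_trans with (q ^ 3)%nat; [lia | apply Nat.pow_lt_mono_l; lia]. }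
  apply Nat.log2_lt_pow2 in Hcube; lia.
Qed.

(** * Badly approximable numbers at dyadic scales *)

Definition level (alpha : R) (x : nat) : nat := dyadic_level (dnint (INR x * alpha)).

(* Pigeonhole cell of x at resolution 1/M: the integer part of M ||x alpha||,
   refined by the half of [0, 1) containing the fractional part of x alpha. *)
Definition cell (alpha M : R) (x : nat) : nat :=
  (2 * nat_floor (dnint (INR x * alpha) * M) + half_side (INR x * alpha))%nat.

Definition harmonic_const (a : R) (m : nat) : R := 8 * 2 ^ m / ln 2 ^ 2 * (1 + INR m) / (1 - a).

Lemma harmonic_const_pos a m : a < 1 -> 0 < harmonic_const a m.
Proof.
  intros Ha; pose proof ln2_pos; pose proof (pos_INR m).
  apply Rdiv_lt_0_compat; [apply Rmult_lt_0_compat; [apply Rdiv_lt_0_compat|]|];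
    try apply Rmult_lt_0_compat; try apply pow_lt; lra.
Qed.

Section BadlyApproximable.
Variables (alpha : R) (m : nat).
Hypothesis Hbad : forall q : nat, (1 <= q)%nat -> / 2 ^ m <= INR q * dnint (INR q * alpha).

Lemma dnint_lower x : (1 <= x)%nat ->
  0 < dnint (INR x * alpha) <= 1 / 2 /\ / dnint (INR x * alpha) <= INR x * 2 ^ m.
Proof.
  intros Hx. pose proof (Hbad x Hx) as Hq. set (d := dnint (INR x * alpha)) in *.
  assert (HM : 0 < 2 ^ m) by (apply pow_lt; lra).
  assert (HMinv : 0 < / 2 ^ m) by (apply Rinv_0_lt_compat; lra).
  assert (Hxpos : 0 < INR x) by (apply lt_0_INR; lia).
  assert (Hd : 0 < d) by (pose proof (dnint_nonneg (INR x * alpha)); fold d in H;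
                          destruct (Rle_lt_or_eq_dec _ _ H) as [|<-]; nra).
  split; [split; [exact Hd | apply dnint_le_half]|].
  replace (/ d) with (/ 2 ^ m * (2 ^ m / d)) by (field; lra).
  replace (INR x * 2 ^ m) with (INR x * d * (2 ^ m / d)) by (field; lra).
  apply Rmult_le_compat_r; [left; apply Rdiv_lt_0_compat|]; lra.
Qed.

Lemma level_spec x : (1 <= x)%nat ->
  2 ^ level alpha x <= / dnint (INR x * alpha) < 2 ^ S (level alpha x) /\
  (1 <= level alpha x <= Nat.log2 x + m)%nat.
Proof.
  intros Hx. destruct (dnint_lower x Hx) as [Hd Hinv].
  destruct (dyadic_level_spec _ Hd) as [Hlev Hlev1]. unfold level.
  split; [exact Hlev | split; [exact Hlev1|]].
  apply Nat.lt_succ_r, (dyadic_level_lt _ _ Hd).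
  destruct (Nat.log2_spec x ltac:(lia)) as [_ Hx2].
  apply lt_INR in Hx2; rewrite INR_pow2 in Hx2.
  replace (S (Nat.log2 x + m)) with (S (Nat.log2 x) + m)%nat by lia; rewrite pow_add.
  eapply Rle_lt_trans; [exact Hinv|].
  apply Rmult_lt_compat_r; [apply pow_lt; lra | exact Hx2].
Qed.

(* Each term is bounded by the bound of its block (k, i) = (log2 x, level x):
   ||x alpha|| > 2^-(i+1), x >= 2^k, log(1/||x alpha||) >= i log 2, log x >= k log 2. *)
Lemma term_le_block a x : 0 < a < 1 -> (2 <= x)%nat ->
  lemma3_term alpha a x <= block_bound a (Nat.log2 x) (level alpha x).
Proof.
  intros Ha Hx. destruct (level_spec x ltac:(lia)) as [[Hd1 Hd2] [Hi1 _]].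
  destruct (dnint_lower x ltac:(lia)) as [[Hd _] _].
  destruct (Nat.log2_spec x ltac:(lia)) as [Hk _].
  assert (Hk1 : (1 <= Nat.log2 x)%nat) by (apply Nat.log2_pos; lia).
  unfold lemma3_term, block_bound. rewrite (Rmult_comm alpha).
  set (d := dnint (INR x * alpha)) in *; set (i := level alpha x) in *; set (k := Nat.log2 x) in *.
  pose proof ln2_pos. apply le_INR in Hk; rewrite INR_pow2 in Hk.
  assert (Hsi : 0 < 2 ^ S i) by (apply pow_lt; lra).
  assert (Hpk : 0 < 2 ^ k) by (apply pow_lt; lra).
  assert (Hip : 0 < INR i * ln 2) by (apply Rmult_lt_0_compat; [apply lt_0_INR; lia | lra]).
  assert (Hkp : 0 < INR k * ln 2) by (apply Rmult_lt_0_compat; [apply lt_0_INR; lia | lra]).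
  assert (Hlnd : INR i * ln 2 <= ln (/ d))
    by (rewrite <- ln_pow by lra; apply ln_le_mono; [apply pow_lt|]; lra).
  assert (Hlnx : INR k * ln 2 <= ln (INR x))
    by (rewrite <- ln_pow by lra; apply ln_le_mono; [apply pow_lt|]; lra).
  assert (Hdi : / 2 ^ S i <= d).
  { rewrite <- (Rinv_inv d); apply Rinv_le_contravar; [apply Rinv_0_lt_compat|]; lra. }
  pose proof (Rpower_pos (INR i * ln 2) a); pose proof (Rpower_pos (INR k * ln 2) (2 - a)).
  pose proof (Rinv_0_lt_compat _ Hsi).
  replace (2 ^ S i / (2 ^ k * Rpower (INR i * ln 2) a * Rpower (INR k * ln 2) (2 - a)))
    with (/ (/ 2 ^ S i * 2 ^ k * Rpower (INR i * ln 2) a * Rpower (INR k * ln 2) (2 - a)))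
    by (field; repeat split; lra).
  apply Rinv_le_contravar; [repeat apply Rmult_lt_0_compat; lra|].
  repeat apply Rmult_le_compat; try (repeat apply Rmult_le_pos); try lra;
    apply Rle_Rpower_l; lra.
Qed.

(* Two points x < y of the dyadic block [2^k, 2^(k+1)) whose multiples of alpha have
   fractional parts in the same half are 2^-(k+m)-separated in ||. alpha||: indeed
   ||(y-x) alpha|| >= 2^-m / (y - x) >= 2^-(k+m). *)
Lemma block_separation k x y : (x < y)%nat -> (2 ^ k <= x)%nat -> (y < 2 ^ S k)%nat ->
  half_side (INR x * alpha) = half_side (INR y * alpha) ->
  / 2 ^ (k + m) <= Rabs (dnint (INR x * alpha) - dnint (INR y * alpha)).
Proof.
  intros Hxy Hx Hy Hs.
  rewrite dnint_same_side, Rabs_minus_sym by exact Hs.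
  eapply Rle_trans; [|apply dnint_sub_le].
  replace (INR y * alpha - INR x * alpha) with (INR (y - x) * alpha)
    by (rewrite minus_INR by lia; ring).
  pose proof (Hbad (y - x) ltac:(lia)) as Hq.
  set (D := dnint (INR (y - x) * alpha)) in *; assert (HD : 0 <= D) by apply dnint_nonneg.
  assert (Hyx : INR (y - x) <= 2 ^ k) by (rewrite <- INR_pow2; apply le_INR; simpl in Hy; lia).
  assert (Hk : 0 < 2 ^ k) by (apply pow_lt; lra).
  rewrite pow_add, Rinv_mult.
  replace D with (/ 2 ^ k * (2 ^ k * D)) by (field; lra).
  apply Rmult_le_compat_l; [left; apply Rinv_0_lt_compat; lra | nra].
Qed.

(* Counting: at most 2(2^(k+m-i)+1) integers of [2^k, 2^(k+1)) satisfy
   ||x alpha|| <= 2^-i, since by separation distinct such x lie in distinct cells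
   at resolution 2^-(k+m), and there are that many cells below 2^-i. *)
Lemma block_count k i (F : list nat) : (i <= k + m)%nat -> NoDup F ->
  (forall x, In x F -> (2 ^ k <= x < 2 ^ S k)%nat /\ dnint (INR x * alpha) <= / 2 ^ i) ->
  (length F <= 2 * (2 ^ (k + m - i) + 1))%nat.
Proof.
  intros Hi HF Hblock. set (M := 2 ^ (k + m)). assert (HM : 0 < M) by (apply pow_lt; lra).
  assert (Hscaled : forall x, 0 <= dnint (INR x * alpha) * M)
    by (intros; apply Rmult_le_pos; [apply dnint_nonneg | lra]).
  assert (Hdistinct : forall x y, In x F -> In y F -> (x < y)%nat -> cell alpha M x <> cell alpha M y).
  { intros x y Hx Hy Hxy Hc; unfold cell in Hc.
    pose proof (half_side_le (INR x * alpha)); pose proof (half_side_le (INR y * alpha)).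
    assert (Hs : half_side (INR x * alpha) = half_side (INR y * alpha)) by lia.
    apply (nat_floor_separated _ _ (Hscaled x) (Hscaled y)); [|lia].
    destruct (Hblock x Hx) as [[Hx1 _] _], (Hblock y Hy) as [[_ Hy2] _].
    pose proof (block_separation k x y Hxy Hx1 Hy2 Hs) as Hsep; fold M in Hsep.
    rewrite <- Rmult_minus_distr_r, Rabs_mult, (Rabs_right M), <- (Rinv_l M) by lra.
    apply Rmult_le_compat_r; lra. }
  apply (pigeonhole (cell alpha M)); [exact HF | |].
  - intros x y Hx Hy Hc. destruct (lt_eq_lt_dec x y) as [[Hlt | Heq] | Hgt]; [| exact Heq |].
    + now destruct (Hdistinct x y Hx Hy Hlt).
    + now destruct (Hdistinct y x Hy Hx Hgt).
  - intros x Hx. destruct (Hblock x Hx) as [_ Hd].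
    destruct (nat_floor_spec _ (Hscaled x)) as [Hfl _].
    assert (Hcells : (nat_floor (dnint (INR x * alpha) * M) <= 2 ^ (k + m - i))%nat).
    { apply INR_le; rewrite INR_pow2; eapply Rle_trans; [exact Hfl|].
      replace (2 ^ (k + m - i)) with (/ 2 ^ i * M)
        by (unfold M; replace (k + m)%nat with (k + m - i + i)%nat at 1 by lia;
            rewrite pow_add; field; apply pow_nonzero; lra).
      apply Rmult_le_compat_r; lra. }
    unfold cell; pose proof (half_side_le (INR x * alpha)); lia.
Qed.

Definition scale_level (x : nat) : nat * nat := (Nat.log2 x, level alpha x).

Lemma fiber_length_le k i l : (i <= k + m)%nat -> NoDup l -> (forall x, In x l -> (2 <= x)%nat) ->
  (length (fiber pair_eq_dec scale_level (k, i) l) <= 2 * (2 ^ (k + m - i) + 1))%nat.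
Proof.
  intros Hi Hl Hx2. apply block_count; [exact Hi | now apply NoDup_filter |].
  intros x Hx. apply filter_In in Hx as [Hx Hlab].
  destruct (pair_eq_dec (scale_level x) (k, i)) as [Heq | _]; [|discriminate].
  injection Heq as <- <-. specialize (Hx2 x Hx).
  destruct (level_spec x ltac:(lia)) as [[Hlev _] _].
  split; [apply Nat.log2_spec; lia|].
  destruct (dnint_lower x ltac:(lia)) as [[Hd _] _].
  rewrite <- (Rinv_inv (dnint _)); apply Rinv_le_contravar; [apply pow_lt|]; lra.
Qed.

Lemma sum_le_harmonic a (l : list nat) K n : 0 < a < 1 -> (1 <= K)%nat -> NoDup l ->
  (forall x, In x l -> (2 <= x)%nat /\ (K <= Nat.log2 x < K + n)%nat) ->
  lsum (lemma3_term alpha a) l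
  <= lsum (fun k => harmonic_const a m / INR k) (seq K n).
Proof.
  intros Ha HK Hl Hrange.
  set (blocks := flat_map (fun k => map (pair k) (seq 1 (k + m))) (seq K n)).
  eapply Rle_trans.
  { apply (lsum_group _ _ pair_eq_dec _ scale_level (fun y => block_bound a (fst y) (snd y)) l blocks).
    - intros y _; left; apply block_bound_pos.
    - intros x Hx. destruct (Hrange x Hx) as [Hx2 Hk].
      destruct (level_spec x ltac:(lia)) as [_ Hi].
      split; [now apply term_le_block|].
      unfold scale_level; apply in_flat_map; exists (Nat.log2 x); split; [apply in_seq; lia|].
      apply in_map, in_seq; lia. }
  unfold blocks; rewrite lsum_flat_map; apply lsum_le; intros k Hk; apply in_seq in Hk.
  rewrite lsum_map; simpl.
  eapply Rle_trans; [|apply row_sum_le; [lra | | lia]].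
  - apply lsum_le; intros i Hi; apply in_seq in Hi.
    eapply Rle_trans; [|apply block_total; lia].
    apply Rmult_le_compat_l; [left; apply block_bound_pos|].
    apply le_INR, fiber_length_le; [lia | exact Hl | intros x Hx; apply Hrange, Hx].
  - pose proof ln2_pos; left; repeat apply Rdiv_lt_0_compat; try apply Rmult_lt_0_compat;
      try apply pow_lt; lra.
Qed.

End BadlyApproximable.

Theorem lemma3 (alpha a : R) (Hba : badly_approximable alpha)
  (Ha0 : 0 < a) (Ha1 : a < 1) :
  exists C : R, 0 < C /\
    forall q : nat, (2 <= q)%nat ->
      sum_f q (q ^ 3) (lemma3_term alpha a) <= C.
Proof.
  destruct Hba as [c [Hc Hbad]]; destruct (exists_inv_pow2_le c Hc) as [m Hm].
  assert (Hbad2 : forall q, (1 <= q)%nat -> / 2 ^ m <= INR q * dnint (INR q * alpha))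
    by (intros q Hq; eapply Rle_trans; [exact Hm | now apply Hbad]).
  pose proof (harmonic_const_pos a m Ha1) as HE.
  exists (5 * harmonic_const a m); split; [lra|]. intros q Hq.
  assert (HK : (1 <= Nat.log2 q)%nat) by (apply Nat.log2_pos; lia).
  rewrite sum_f_as_lsum.
  eapply Rle_trans.
  - apply (sum_le_harmonic alpha m Hbad2 a _ (Nat.log2 q) (2 * Nat.log2 q + 3)); [lra | exact HK | apply seq_NoDup |].
    intros x Hx; apply in_seq in Hx.
    assert (Hq3 : (q <= q ^ 3)%nat) by (simpl; nia).
    split; [lia | apply log2_cube_window; lia].
  - apply harmonic_window_le; [lra | exact HK].
Qed.
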